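(* Let $q=16$ and let $\mathbb D$ be the $3$-$(17,4,2)$ design $(U_{17},\mathcal B_4(\mathcal C_{\{3,5\}}^\perp|_{\mathrm{GF}(16)}))$. Then $12\le \dim_{16}\mathbb D\le 13$.
   Context: $U_{17}$ is the set of $17$-th roots of unity in $\mathrm{GF}(256)$; coordinates are indexed by $U_{17}$. With $q=16$, $\mathcal C_{\{3,5\}}=\{(a_3u^3+a_{q-2}u^{q-2}+a_5u^5+a_{q-4}u^{q-4})_{u\in U_{q+1}}: a_i\in\mathrm{GF}(q^2)\}$, $\mathcal C_{\{3,5\}}^\perp$ is its dual under the standard inner product, $\mathcal C^\perp_{\{3,5\}}|_{\mathrm{GF}(16)}=\mathcal C^\perp_{\{3,5\}}\cap\mathrm{GF}(16)^{17}$, and $\mathcal B_4(\mathcal C)$ is the set of supports of weight-$4$ codewords. The dimension $\dim_{16}\mathbb D$ is the minimum rank over $\mathrm{GF}(16)$ among all matrices obtained from the $(0,1)$ block-by-point incidence matrix of $\mathbb D$ by replacing each $1$ with an arbitrary nonzero element of $\mathrm{GF}(16)$. *)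

From HB Require Import structures.
From mathcomp Require Import all_boot all_order all_algebra all_field.
Set Implicit Arguments. Unset Strict Implicit. Unset Printing Implicit Defensive.
Import GRing.Theory.
Local Open Scope ring_scope.

(* U_17 : the 17-th roots of unity of F (F will be GF(256)). *)
Notation U17 F := {u : F | u ^+ 17 == 1}.

Definition C35 (F : finFieldType) : {set {ffun U17 F -> F}} :=
  [set c : {ffun U17 F -> F} | [exists a : F * F * F * F,
     c == [ffun u : U17 F => a.1.1.1 * (val u) ^+ 3 + a.1.1.2 * (val u) ^+ 14
                        + a.1.2 * (val u) ^+ 5 + a.2 * (val u) ^+ 12]]].

Definition C35dual (F : finFieldType) : {set {ffun U17 F -> F}} :=
  [set c : {ffun U17 F -> F} | [forall x in C35 F, \sum_(u : U17 F) c u * (x : {ffun U17 F -> F}) u == 0]].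

(* Restriction to GF(16): GF(16) is the image of K (#|K| = 16) under the
   field embedding f : K -> F; codewords of C^perp|_{GF(16)} are the vectors
   over K whose image under f lies in C^perp. *)
Definition C35dual_res (K F : finFieldType) (f : {rmorphism K -> F})
  : {set {ffun U17 F -> K}} :=
  [set c : {ffun U17 F -> K} | [ffun u => f (c u)] \in C35dual F].

Definition blocks4 (K F : finFieldType) (f : {rmorphism K -> F})
  : {set {set U17 F}} :=
  [set B : {set U17 F} | [exists c in C35dual_res f,
             (B == [set u | (c : {ffun U17 F -> K}) u != 0]) && (#|B| == 4)%N]].

Definition weighted_incidence (K F : finFieldType) (f : {rmorphism K -> F})
  (M : 'M[K]_(#|blocks4 f|, #|{: U17 F}|)) : bool :=
  [forall i, forall j,
     (M i j != 0) == (@enum_val _ (mem {: U17 F}) j \in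
                        @enum_val _ (mem (blocks4 f)) i)].

Definition dim16 (K F : finFieldType) (f : {rmorphism K -> F}) : nat :=
  \big[minn/#|{: U17 F}|]_(M : 'M[K]_(#|blocks4 f|, #|{: U17 F}|)
                            | @weighted_incidence K F f M) \rank M.

(* Let z be a primitive 17th root of unity in GF(256) that is a root of x^8 + x^5 + x^4 + x^3 + 1.
   Then w = z^2 + z^5 + z^11 is a primitive cube root of unity, so it lies in GF(4), inside GF(16).
   The word with entries 1, 1, 1, w at z^s, z^(s+1), z^(s+3), z^(s+5) is orthogonal to u^3 because
   w z^15 = 1 + z^3 + z^9 in characteristic 2, and hence also to u^12, u^14, u^5: the map
   x |-> x^4 fixes w and sends the exponent 3 to 12, 14, 5 modulo 17.  The supports of these words
   are blocks, and for s < 12 they meet the points z^5, ..., z^16 in a triangular pattern with full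
   diagonal, so every weighted incidence matrix has rank at least 12.  Conversely, choosing one
   codeword per block gives a weighted incidence matrix M with M G = 0, where the 17 x 4 matrix G
   of the monomials u^3, u^14, u^5, u^12 has rank 4 (a nonzero polynomial of degree < 17 cannot
   vanish on all of U_17); hence rank M <= 13. *)

From HB Require Import structures.
From mathcomp Require Import all_boot all_order all_algebra all_field all_fingroup all_solvable.
From mathcomp Require Import ring zify.
Set Implicit Arguments. Unset Strict Implicit. Unset Printing Implicit Defensive.
Import GRing.Theory.
Local Open Scope ring_scope.

Lemma prim_root_prime (R : idomainType) p (z : R) :
  prime p -> z ^+ p = 1 -> z != 1 -> p.-primitive_root z.
Proof.
move=> p_pr zp1 z_neq1.
have [m prim_m m_dvd] := prim_order_exists (prime_gt0 p_pr) zp1.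
have /primeP[_ /(_ m m_dvd) /orP[/eqP m1 | /eqP <- //]] := p_pr.
by move: prim_m z_neq1; rewrite m1 => /prim_expr_order; rewrite expr1 => ->; rewrite eqxx.
Qed.

Lemma exists_prim_root (F : finFieldType) p :
  prime p -> (p %| #|F|.-1)%N -> exists z : F, p.-primitive_root z.
Proof.
move=> p_pr; rewrite -card_finField_unit => /(Cauchy p_pr)[x _ ox].
exists (val x); apply: prim_root_prime => //.
  by rewrite -FinRing.val_unitX -ox expg_order.
apply: contraTneq p_pr => x1.
have x_1 : x = 1%g by apply: val_inj.
by rewrite -ox x_1 order1.
Qed.

Lemma cube_root_unity_eq0 (R : idomainType) (a : R) :
  3.-primitive_root a -> a ^+ 2 + a + 1 = 0.
Proof.
move=> prim_a; have a_neq1 : a != 1 by rewrite -[a]expr1 -(prim_order_dvd prim_a).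
have : (a - 1) * (a ^+ 2 + a + 1) == 0.
  have -> : (a - 1) * (a ^+ 2 + a + 1) = a ^+ 3 - 1 by ring.
  by rewrite (prim_expr_order prim_a) subrr.
by rewrite mulf_eq0 subr_eq0 (negbTE a_neq1) => /eqP.
Qed.

Lemma cube_root_unity_in_image (K F : fieldType) (f : {rmorphism K -> F}) (u : K) (x : F) :
  3.-primitive_root u -> x ^+ 2 + x + 1 = 0 -> exists w, f w = x.
Proof.
move=> prim_u x_root; have prim_fu : 3.-primitive_root (f u) by rewrite fmorph_primitive_root.
have fu_root := cube_root_unity_eq0 prim_fu; have fu3 := prim_expr_order prim_fu.
have : (x - f u) * (x - f u ^+ 2) == 0.
  have -> : (x - f u) * (x - f u ^+ 2)
    = x ^+ 2 + x + 1 - x * (f u ^+ 2 + f u + 1) + (f u ^+ 3 - 1) by ring.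
  by rewrite x_root fu_root fu3 mulr0 !subrr addr0.
rewrite mulf_eq0 !subr_eq0 => /orP[/eqP-> | /eqP->]; first by exists u.
by exists (u ^+ 2); rewrite rmorphXn.
Qed.

Lemma sum_mul_supp4 (T : finType) (R : pzSemiRingType) (a b c d : T) (ka kb kc kd : R)
    (h : T -> R) :
  uniq [:: a; b; c; d] ->
  \sum_u (if u == a then ka else if u == b then kb else if u == c then kc
          else if u == d then kd else 0) * h u
  = ka * h a + kb * h b + kc * h c + kd * h d.
Proof.
rewrite /= !inE !negb_or andbT => /and3P[/and3P[ab ac ad] /andP[bc bd] cd].
rewrite (bigD1 a) //= eqxx (bigD1 b) /=; last by rewrite eq_sym.
rewrite eq_sym (negbTE ab) eqxx (bigD1 c) /=; last by rewrite eq_sym ac eq_sym bc.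
rewrite eq_sym (negbTE ac) eq_sym (negbTE bc) eqxx (bigD1 d) /=; last first.
  by rewrite eq_sym ad eq_sym bd eq_sym cd.
rewrite eq_sym (negbTE ad) eq_sym (negbTE bd) eq_sym (negbTE cd) eqxx.
rewrite big1 ?addr0 ?addrA // => u /andP[/andP[/andP[ua ub] uc] ud].
by rewrite (negbTE ua) (negbTE ub) (negbTE uc) (negbTE ud) mul0r.
Qed.

Lemma mxrank_trig_submx (R : fieldType) m p n (M : 'M[R]_(m, p))
    (r : 'I_n -> 'I_m) (c : 'I_n -> 'I_p) :
  (forall i j : 'I_n, (i < j)%N -> M (r i) (c j) = 0) ->
  (forall i, M (r i) (c i) != 0) -> (n <= \rank M)%N.
Proof.
move=> M_trig M_diag; pose A := \matrix_(i, j) M (r i) (c j).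
have rankA : \rank A = n.
  apply: mxrank_unit; rewrite unitmxE unitfE det_trig.
    by apply/prodf_neq0 => i _; rewrite mxE.
  by apply/is_trig_mxP => i j ij; rewrite mxE M_trig.
suff : (\rank A <= \rank M)%N by rewrite rankA.
have -> : A = rowsub r M *m colsub c 1%:M.
  by apply/matrixP => i j; rewrite mulmx_colsub mulmx1 !mxE.
by rewrite (leq_trans (mxrankM_maxl _ _)) // rowsubE mxrankM_maxr.
Qed.

Lemma mxrank_unity_root_monomials (F : fieldType) n m (z : F) (x : 'I_m -> F) (es : seq nat) :
  n.-primitive_root z -> uniq es -> all (gtn n) es ->
  (forall i, (i < n)%N -> exists j, x j = z ^+ i) ->
  \rank (\matrix_(j < m, k < size es) x j ^+ nth 0%N es k) = size es.
Proof.
move=> prim_z uniq_es es_lt x_onto.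
rewrite -mxrank_tr; apply/eqP; apply: inj_row_free => v v_ker.
pose p := \sum_(k < size es) v 0 k *: 'X^(nth 0%N es k).
have p_root i : (i < n)%N -> root p (z ^+ i).
  move=> lt_in; have [j <-] := x_onto i lt_in.
  move/matrixP: v_ker => /(_ 0 j); rewrite !mxE => v_ker.
  rewrite /root horner_sum; apply/eqP; apply: etrans v_ker; apply: eq_bigr => k _.
  by rewrite !mxE hornerZ hornerXn.
have p0 : p = 0.
  apply: (@roots_geq_poly_eq0 _ _ [seq z ^+ i | i <- iota 0 n]).
  - by apply/allP => y /mapP[i]; rewrite mem_iota => /andP[_ lt_in] ->; exact: p_root.
  - rewrite map_inj_in_uniq ?iota_uniq // => i j; rewrite !mem_iota /= => lt_in lt_jn /eqP.
    by rewrite (eq_prim_root_expr prim_z) !modn_small // => /eqP.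
  - rewrite size_map size_iota; apply: (leq_trans (size_sum _ _ _)); apply/bigmax_leqP => k _.
    by rewrite (leq_trans (size_scale_leq _ _)) // size_polyXn; exact: (allP es_lt) (mem_nth _ _).
apply/rowP => k; rewrite mxE; have := congr1 (coefp (nth 0%N es k)) p0.
rewrite /= coef0 coef_sum (bigD1 k) //= coefZ coefXn eqxx mulr1 big1 ?addr0 // => k' k'_neq.
rewrite coefZ coefXn nth_uniq //; case: eqP => [/val_inj kk | _]; last by rewrite mulr0.
by rewrite kk eqxx in k'_neq.
Qed.

Section UnityRootPoints.
Variables (F : finFieldType) (n : nat) (z : F).
Hypothesis prim_z : n.-primitive_root z.

Definition unity_pt (i : nat) : {u : F | u ^+ n == 1} :=
  insubd (exist (fun u : F => u ^+ n == 1) 1 (introT eqP (expr1n F n))) (z ^+ i).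

Lemma val_unity_pt i : val (unity_pt i) = z ^+ i.
Proof.
by rewrite insubdK // unfold_in /= -exprM mulnC exprM (prim_expr_order prim_z) expr1n.
Qed.

Lemma unity_pt_eq i j : (unity_pt i == unity_pt j) = (i == j %[mod n])%N.
Proof. by rewrite -val_eqE /= !val_unity_pt (eq_prim_root_expr prim_z). Qed.

Lemma unity_pt_eq_small i j :
  (i < n)%N -> (j < n)%N -> (unity_pt i == unity_pt j) = (i == j).
Proof. by move=> ltin ltjn; rewrite unity_pt_eq !modn_small. Qed.

Lemma card_unity_roots : #|{: {u : F | u ^+ n == 1}}| = n.
Proof.
have root_u (u : {u : F | u ^+ n == 1}) : val u ^+ n = 1 by exact: eqP (valP u).
have pt_bij : bijective (fun i : 'I_n => unity_pt i).
  exists (fun u => sval (prim_rootP prim_z (root_u u))) => [i | u].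
    case: prim_rootP => /= j; rewrite val_unity_pt => /eqP.
    by rewrite (eq_prim_root_expr prim_z) !modn_small // => /eqP ij; apply: val_inj.
  by case: prim_rootP => /= j uj; apply: val_inj; rewrite val_unity_pt.
by rewrite -(bij_eq_card pt_bij) card_ord.
Qed.

Lemma enum_val_unity_pt i :
  exists j, val (@enum_val _ (mem {: {u : F | u ^+ n == 1}}) j) = z ^+ i.
Proof. exists (enum_rank (unity_pt i)); by rewrite enum_rankK val_unity_pt. Qed.

End UnityRootPoints.

(* x^17 - 1 = (x - 1) cyc17a cyc17b over GF(2), both factors being irreducible. *)
Definition cyc17a (R : pzRingType) (z : R) := z ^+ 8 + z ^+ 5 + z ^+ 4 + z ^+ 3 + 1.
Definition cyc17b (R : pzRingType) (z : R) := z ^+ 8 + z ^+ 7 + z ^+ 6 + z ^+ 4 + z ^+ 2 + z + 1.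

Lemma cyc17_root (R : idomainType) (z : R) :
  2 = 0 :> R -> 17.-primitive_root z -> cyc17a z = 0 \/ cyc17b z = 0.
Proof.
move=> R2 prim_z; have z17 := prim_expr_order prim_z.
have z_neq1 : z != 1 by rewrite -[z]expr1 -(prim_order_dvd prim_z).
have : (z - 1) * (cyc17a z * cyc17b z) == 0.
  have -> : (z - 1) * (cyc17a z * cyc17b z) = z ^+ 17 - 1 - 2 * (z ^+ 4 - z ^+ 13).
    by rewrite /cyc17a /cyc17b; ring.
  by rewrite z17 R2 subrr mul0r subr0.
rewrite !mulf_eq0 subr_eq0 (negbTE z_neq1) /=.
by case/orP => /eqP; [left | right].
Qed.

(* The cofactors in these certificates come from division over GF(2), after reducing exponents
   modulo 17. *)
Lemma cyc17a_expr3 (R : comPzRingType) (z : R) :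
  2 = 0 :> R -> z ^+ 17 = 1 -> cyc17b z = 0 -> cyc17a (z ^+ 3) = 0.
Proof.
move=> R2 z17 zb.
have -> : cyc17a (z ^+ 3) = (z ^+ 7 - z ^+ 6 + z ^+ 3 - z + 1) * cyc17b z
    + z ^+ 7 * (z ^+ 17 - 1) + 2 * (z ^+ 12 - z ^+ 11 - z ^+ 4).
  by rewrite /cyc17a /cyc17b; ring.
by rewrite zb z17 R2 subrr !mul0r !mulr0 !addr0.
Qed.

Lemma pchar2_card256 (F : finFieldType) : #|F| = 256%N -> 2%N \in [pchar F].
Proof. by move=> cardF; apply: (@card_finPcharP F 2 8). Qed.

Lemma exists_prim_root17_cyc17a (F : finFieldType) :
  #|F| = 256%N -> exists2 z : F, 17.-primitive_root z & cyc17a z = 0.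
Proof.
move=> cardF; have F2 := pcharf0 (pchar2_card256 cardF).
have [z prim_z] : exists z : F, 17.-primitive_root z by apply: exists_prim_root; rewrite ?cardF.
have [za | zb] := cyc17_root F2 prim_z; first by exists z.
exists (z ^+ 3); first by rewrite prim_root_exp_coprime.
exact: cyc17a_expr3 F2 (prim_expr_order prim_z) zb.
Qed.

Definition omega17 (R : pzRingType) (z : R) := z ^+ 2 + z ^+ 5 + z ^+ 11.

Lemma omega17_cube_root (R : comPzRingType) (z : R) :
  2 = 0 :> R -> z ^+ 17 = 1 -> cyc17a z = 0 -> omega17 z ^+ 2 + omega17 z + 1 = 0.
Proof.
move=> R2 z17 za.
have -> : omega17 z ^+ 2 + omega17 z + 1 = (1 + z ^+ 2 - z ^+ 3) * cyc17a z
    + z ^+ 5 * (z ^+ 17 - 1) + 2 * (z ^+ 7 + z ^+ 11 + z ^+ 13 + z ^+ 16).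
  by rewrite /omega17 /cyc17a; ring.
by rewrite za z17 R2 subrr !mul0r !mulr0 !addr0.
Qed.

(* The check of the word with entries 1, 1, 1, w at z^s, z^(s+1), z^(s+3), z^(s+5) against the
   monomial u^e is z^(s e) * block_poly w (z^e). *)
Definition block_poly (R : pzRingType) (w x : R) := 1 + x + x ^+ 3 + w * x ^+ 5.

(* The exponents 3, q - 2, 5, q - 4 of C_{3,5}: the orbit of 3 under multiplication by 4 mod 17. *)
Definition C35_exps : seq nat := [:: 3; 14; 5; 12].

Lemma block_poly_omega17 (R : comPzRingType) (z : R) :
  2 = 0 :> R -> z ^+ 17 = 1 -> block_poly (omega17 z) (z ^+ 3) = 0.
Proof.
move=> R2 z17.
have -> : block_poly (omega17 z) (z ^+ 3)
    = (2 + (z ^+ 17 - 1)) * (1 + z ^+ 3 + z ^+ 9) by rewrite /block_poly /omega17; ring.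
by rewrite R2 z17 subrr addr0 mul0r.
Qed.

Lemma block_poly_expr4 (R : comNzRingType) (w x : R) :
  2%N \in [pchar R] -> w ^+ 4 = w -> block_poly w (x ^+ 4) = block_poly w x ^+ 4.
Proof.
move=> R2 w4; have pchar4 : [pchar R].-nat 4 by rewrite (eq_pnat _ (pcharf_eq R2)).
rewrite /block_poly; set y := x ^+ 4.
by rewrite !exprDn_pchar // (exprMn _ w) w4 expr1n /y -!exprM.
Qed.

Lemma block_poly_C35_exps (R : comNzRingType) (z : R) :
  2%N \in [pchar R] -> 17.-primitive_root z -> cyc17a z = 0 ->
  {in C35_exps, forall e, block_poly (omega17 z) (z ^+ e) = 0}.
Proof.
move=> R2 prim_z za; have z17 := prim_expr_order prim_z; have R20 := pcharf0 R2.
have omega4 : omega17 z ^+ 4 = omega17 z.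
  have -> : omega17 z ^+ 4
      = omega17 z + omega17 z * (omega17 z - 1) * (omega17 z ^+ 2 + omega17 z + 1) by ring.
  by rewrite omega17_cube_root // mulr0 addr0.
have Q3 := block_poly_omega17 R20 z17.
have Q_mul4 e : block_poly (omega17 z) (z ^+ e) = 0 ->
    block_poly (omega17 z) (z ^+ ((e * 4) %% 17)) = 0.
  by rewrite (prim_expr_mod prim_z) exprM block_poly_expr4 // => ->; rewrite expr0n.
have Q12 := Q_mul4 _ Q3; have Q14 := Q_mul4 _ Q12; have Q5 := Q_mul4 _ Q14.
by move=> e; rewrite !inE => /or4P[] /eqP ->.
Qed.

Lemma C35dualP (F : finFieldType) (c : {ffun U17 F -> F}) :
  reflect {in C35_exps, forall e, \sum_u c u * val u ^+ e = 0} (c \in C35dual F).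
Proof.
rewrite inE; apply: (iffP forall_inP) => [orth e e_in | orth x].
  have mono_C35 : [ffun u : U17 F => val u ^+ e] \in C35 F.
    rewrite inE; apply/existsP; move: e_in; rewrite !inE => /or4P[] /eqP->;
      [exists (1, 0, 0, 0) | exists (0, 1, 0, 0) | exists (0, 0, 1, 0) | exists (0, 0, 0, 1)];
      by apply/eqP/ffunP => u; rewrite !ffunE /=; ring.
  by apply: etrans (eqP (orth _ mono_C35)); apply: eq_bigr => u _; rewrite ffunE.
rewrite inE => /existsP[[[[a1 a2] a3] a4] /eqP->] /=; apply/eqP.
transitivity (a1 * \sum_u c u * val u ^+ 3 + a2 * \sum_u c u * val u ^+ 14
              + a3 * \sum_u c u * val u ^+ 5 + a4 * \sum_u c u * val u ^+ 12).
  by rewrite !mulr_sumr -!big_split; apply: eq_bigr => u _; rewrite ffunE /=; ring.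
by rewrite !orth ?inE ?eqxx ?orbT // !mulr0 !addr0.
Qed.

Lemma C35dual_resP (K F : finFieldType) (f : {rmorphism K -> F}) (c : {ffun U17 F -> K}) :
  reflect {in C35_exps, forall e, \sum_u f (c u) * val u ^+ e = 0} (c \in C35dual_res f).
Proof.
have sumE e : \sum_u [ffun u => f (c u)] u * val u ^+ e = \sum_u f (c u) * val u ^+ e.
  by apply: eq_bigr => u _; rewrite ffunE.
by rewrite inE; apply: (iffP (C35dualP _)) => orth e /orth; rewrite sumE.
Qed.



Section ShiftedBlocks.
Variables (K F : finFieldType) (f : {rmorphism K -> F}) (z : F) (w : K).
Hypotheses (F2 : 2%N \in [pchar F]) (prim_z : 17.-primitive_root z) (cyc_z : cyc17a z = 0).
Hypothesis fw : f w = omega17 z.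

Local Notation pt := (@unity_pt F 17 z).

Definition block_pts (s : nat) := [:: pt s; pt (s + 1); pt (s + 3); pt (s + 5)].

Definition shifted_block s : {set U17 F} := [set u in block_pts s].

Definition shifted_word s : {ffun U17 F -> K} :=
  [ffun u => if u == pt s then 1 else if u == pt (s + 1) then 1
             else if u == pt (s + 3) then 1 else if u == pt (s + 5) then w else 0].

Let w_neq0 : w != 0.
Proof.
apply/eqP => w0; have := omega17_cube_root (pcharf0 F2) (prim_expr_order prim_z) cyc_z.
by rewrite -fw w0 rmorph0 expr0n !add0r => /eqP; rewrite oner_eq0.
Qed.

Lemma uniq_block_pts s : (s <= 11)%N -> uniq (block_pts s).
Proof. by move=> s_le; rewrite /= !inE !unity_pt_eq_small //; lia. Qed.

Lemma card_shifted_block s : (s <= 11)%N -> #|shifted_block s| = 4%N.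
Proof. by move=> s_le; rewrite cardsE; apply/card_uniqP/uniq_block_pts. Qed.

Lemma support_shifted_word s : [set u | shifted_word s u != 0] = shifted_block s.
Proof.
apply/setP => u; rewrite !inE ffunE.
by case: (u == pt s); case: (u == pt (s + 1)); case: (u == pt (s + 3));
   case: (u == pt (s + 5)); rewrite ?oner_eq0 ?w_neq0 ?eqxx.
Qed.

Lemma sum_shifted_word s (h : U17 F -> F) : (s <= 11)%N ->
  \sum_u f (shifted_word s u) * h u
  = h (pt s) + h (pt (s + 1)) + h (pt (s + 3)) + f w * h (pt (s + 5)).
Proof.
move=> s_le; under eq_bigr => u _ do rewrite ffunE !(fun_if f) rmorph1 rmorph0.
by rewrite sum_mul_supp4 ?uniq_block_pts // !mul1r.
Qed.

Lemma shifted_word_dual s : (s <= 11)%N -> shifted_word s \in C35dual_res f.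
Proof.
move=> s_le; apply/C35dual_resP => e e_in.
rewrite sum_shifted_word // !val_unity_pt // fw.
have -> : (z ^+ s) ^+ e + (z ^+ (s + 1)) ^+ e + (z ^+ (s + 3)) ^+ e
    + omega17 z * (z ^+ (s + 5)) ^+ e
    = (z ^+ s) ^+ e * block_poly (omega17 z) (z ^+ e).
  by rewrite /block_poly !exprD !exprMn -!(exprAC z e); ring.
by rewrite block_poly_C35_exps // mulr0.
Qed.

Lemma shifted_block_in_blocks4 s : (s <= 11)%N -> shifted_block s \in blocks4 f.
Proof.
move=> s_le; rewrite inE; apply/existsP; exists (shifted_word s).
by rewrite shifted_word_dual // support_shifted_word eqxx card_shifted_block.
Qed.

Lemma rank_weighted_incidence_ge12 (M : 'M[K]_(#|blocks4 f|, #|{: U17 F}|)) :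
  weighted_incidence M -> (12 <= \rank M)%N.
Proof.
move=> incM; have blocks4_s (s : 'I_12) : shifted_block s \in blocks4 f.
  by apply: shifted_block_in_blocks4; rewrite -ltnS.
pose r (s : 'I_12) := enum_rank_in (blocks4_s ord0) (shifted_block s).
pose c (t : 'I_12) := enum_rank (pt (t + 5)).
have M_supp s t : (M (r s) (c t) != 0) = (pt (t + 5) \in shifted_block s).
  move/forallP: incM => /(_ (r s)) /forallP /(_ (c t)) /eqP ->.
  by rewrite enum_rankK (enum_rankK_in _ (blocks4_s s)).
apply: (mxrank_trig_submx (r := r) (c := c)) => [s t lt_st | s].
  have lt_s := ltn_ord s; have lt_t := ltn_ord t.
  apply/eqP; rewrite -[_ == 0]negbK M_supp !inE !unity_pt_eq_small //; lia.
by rewrite M_supp !inE eqxx !orbT.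
Qed.

End ShiftedBlocks.


Lemma weighted_incidence_of_codewords (K F : finFieldType) (f : {rmorphism K -> F}) :
  exists2 M : 'M[K]_(#|blocks4 f|, #|{: U17 F}|), weighted_incidence M &
    forall i, exists2 c, c \in C35dual_res f & forall j, M i j = c (enum_val j).
Proof.
have [word word_dual word_supp] : exists2 word : 'I_#|blocks4 f| -> {ffun U17 F -> K},
    forall i, word i \in C35dual_res f & forall i, [set u | word i u != 0] = enum_val i.
  apply: (@fin_all_exists2 _ (fun=> {ffun U17 F -> K})
    (fun _ c => c \in C35dual_res f) (fun i c => [set u | c u != 0] = enum_val i)) => i.
  have := enum_valP i; rewrite inE.
  by case/existsP => c /andP[c_dual /andP[/eqP supp _]]; exists c.
exists (\matrix_(i, j) word i (enum_val j)) => [|i].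
  apply/forallP => i; apply/forallP => j.
  by rewrite mxE -word_supp inE.
by exists (word i) => // j; rewrite mxE.
Qed.

Lemma rank_codeword_rows_le13 (K F : finFieldType) (f : {rmorphism K -> F}) (z : F) m
    (M : 'M[K]_(m, #|{: U17 F}|)) :
  17.-primitive_root z ->
  (forall i, exists2 c, c \in C35dual_res f & forall j, M i j = c (enum_val j)) ->
  (\rank M <= 13)%N.
Proof.
move=> prim_z rowsM.
pose G : 'M[F]_(#|{: U17 F}|, size C35_exps) :=
  \matrix_(j, k) val (@enum_val _ (mem {: U17 F}) j) ^+ nth 0%N C35_exps k.
have rankG : \rank G = 4%N.
  by apply: (mxrank_unity_root_monomials prim_z) => // i _; exact: enum_val_unity_pt.
have MG0 : map_mx f M *m G = 0.
  apply/matrixP => i k; rewrite !mxE; have [c /C35dual_resP c_dual Mc] := rowsM i.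
  apply: etrans (c_dual _ (mem_nth 0%N (ltn_ord k))).
  under eq_bigr => j _ do rewrite !mxE Mc.
  by rewrite -(big_enum_val (fun u => f (c u) * val u ^+ nth 0%N C35_exps k)).
have := mxrank_mul_min (map_mx f M) G; have := card_unity_roots prim_z.
by rewrite MG0 mxrank0 mxrank_map rankG; lia.
Qed.

Local Close Scope ring_scope.

Theorem theorem32 (K F : finFieldType) (f : {rmorphism K -> F}) :
  #|K| = 16 -> #|F| = 256 -> 12 <= dim16 f <= 13.
Proof.
move=> cardK cardF; have F2 := pchar2_card256 cardF.
have [z prim_z cyc_z] := exists_prim_root17_cyc17a cardF.
have [u prim_u] : exists u : K, (3.-primitive_root u)%R.
  by apply: exists_prim_root; rewrite ?cardK.
have [w fw] := cube_root_unity_in_image f prim_u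
  (omega17_cube_root (pcharf0 F2) (prim_expr_order prim_z) cyc_z).
apply/andP; split; rewrite /dim16.
  apply: (big_ind (leq 12)) => [|m1 m2 le_m1 le_m2 | M incM].
  - by rewrite (card_unity_roots prim_z).
  - by rewrite leq_min le_m1.
  - exact: rank_weighted_incidence_ge12 F2 prim_z cyc_z fw M incM.
have [M incM rowsM] := weighted_incidence_of_codewords f.
have := @Order.TotalTheory.bigmin_inf _ nat _ _ M _ 13 _ incM
  (rank_codeword_rows_le13 prim_z rowsM).
by rewrite minEnat.
Qed.
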